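(* Assume $\omega$ satisfies $(\mathbf{TC})_{C,g}$ or $(\mathbf{TCG})_{C,g}$. For each $N\in\mathbb{N}$ and $T>0$, \[ \mathbb{E}\big[\|(W^{\beta,\omega}_N)^{-1}\|_T^2\big]<\infty\qquad\text{and}\qquad\mathbb{E}\Big[\Big\|\frac{\partial}{\partial\beta}\log W^{\beta,\omega}_N\Big\|_T^2\Big]<\infty, \] where the norms are taken in the variable $\beta$.
   Context: Fix $d\ge3$; $(S_n)$ is a random walk on $\mathbb{Z}^d$ with i.i.d. bounded increments, law $P^S_0$, expectation $E^S_0$. Independently, $\omega=(\omega_{n,z})_{(n,z)\in\mathbb{N}\times\mathbb{Z}^d}$ is a Markovian random field with law $\mathbb{P}$ (expectation $\mathbb{E}$), $\mathbb{E}[e^{\beta\omega_{n,z}}]<\infty$ for all real $\beta$ (Markovian: conditional law of $(\omega_v)_{v\in V}$ given $\mathscr{F}_{V^c}$ equals that given $\mathscr{F}_{\partial V}$, $\mathscr{F}_\Lambda=\sigma(\omega_v:v\in\Lambda)$). $d_1(A,B)=\inf\{|x-y|_1+|m-k|:(m,x)\in A,(k,y)\in B\}$. $(\mathbf{TC})_{C,g}$: for finite $\Delta\subseteq V$ with $d_1(\Delta,V^c)>1$ and $A\subseteq V^c$, the Radon–Nikodym derivative of the conditional law of $(\omega_v)_{v\in\Delta}$ given $\omega|_{V^c}=\eta$ w.r.t. that given $\omega|_{V^c}=\eta'$ is at most $\exp(C\sum_{(m,x)\in\partial\Delta,(k,y)\in\partial A}e^{-g|x-y|_1-g|m-k|})$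 whenever $\eta,\eta'\in[0,\infty)^{\mathbb{N}\times\mathbb{Z}^d}$ agree on $V^c\setminus A$; $(\mathbf{TCG})_{C,g}$: same with sum over $(m,x)\in\Delta,(k,y)\in A$. $Z^{\beta,\omega}_N=E^S_0[\exp(\beta\sum_{k=1}^N\omega_{k,S_k})]$ and $W^{\beta,\omega}_N=Z^{\beta,\omega}_N/\mathbb{E}[Z^{\beta,\omega}_N]$. For a Borel function $f$ of $\beta$ and $T>0$, $\|f\|_T=\operatorname{ess\,sup}\{|f(\beta)|:0\le\beta\le T\}$. *)

From HB Require Import structures.
From mathcomp Require Import all_boot all_order all_algebra.
From mathcomp Require Import all_classical all_reals all_analysis ess_sup_inf.

Set Implicit Arguments.
Unset Strict Implicit.
Unset Printing Implicit Defensive.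

Import Order.TTheory GRing.Theory Num.Theory.
Import numFieldNormedType.Exports.
Local Open Scope classical_set_scope.
Local Open Scope ring_scope.

(* Sites of the space-time lattice N x Z^d; Z^d is represented by 'rV[int]_d. *)
Definition site (d : nat) : Type := (nat * 'rV[int]_d)%type.

Definition dist1 (d : nat) (u v : site d) : nat :=
  (\sum_(i < d) `|u.2 ord0 i - v.2 ord0 i|%N + `|(u.1 : int) - (v.1 : int)|%N)%N.

Definition bdry (d : nat) (L : set (site d)) : set (site d) :=
  [set u | ~ L u /\ exists2 v, L v & dist1 u v = 1%N].

Definition cylsig (d : nat) (R : realType) (L : set (site d))
  : set (set (site d -> R)) :=
  <<s [set E | exists v (B : set R),
        [/\ L v, measurable B & E = (fun eta : site d -> R => eta v) @^-1` B]] >>.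

Definition cyl_meas_fun (d : nat) (R : realType) (L : set (site d))
  (h : (site d -> R) -> R) : Prop :=
  forall B : set R, measurable B -> cylsig L (h @^-1` B).

(* Markov property: for every V and every F_V-event E, the conditional
   probability P(omega in E | F_{V^c}) has an F_{boundary V}-measurable version. *)
Definition markov_field (d : nat) (R : realType) (dO : measure_display)
  (Om : measurableType dO) (P : probability Om R) (om : Om -> site d -> R) : Prop :=
  forall (V : set (site d)) (E : set (site d -> R)), cylsig V E ->
    exists h : (site d -> R) -> R, cyl_meas_fun (bdry V) h /\
      forall B, cylsig (~` V) B ->
        P (om @^-1` (E `&` B)) = (\int[P]_(x in om @^-1` B) (h (om x))%:E)%E.

(* kappa is a (regular) conditional law of (omega_v)_{v in Dl} given
   omega|_{V^c} = eta. *)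
Definition is_cond_law (d : nat) (R : realType) (dO : measure_display)
  (Om : measurableType dO) (P : probability Om R) (om : Om -> site d -> R)
  (Dl V : set (site d)) (kappa : (site d -> R) -> set (site d -> R) -> R) : Prop :=
  [/\ (forall eta, [/\ kappa eta setT = 1,
         (forall E, cylsig Dl E -> 0 <= kappa eta E) &
         (forall F : nat -> set (site d -> R), (forall n, cylsig Dl (F n)) ->
            trivIset setT F ->
            (fun n => \sum_(i < n) kappa eta (F i)) @ \oo --> kappa eta (\bigcup_n F n))]),
      (forall E, cylsig Dl E -> cyl_meas_fun (~` V) (fun eta => kappa eta E)) &
      (forall E B, cylsig Dl E -> cylsig (~` V) B ->
        P (om @^-1` (E `&` B)) = (\int[P]_(x in om @^-1` B) (kappa (om x) E)%:E)%E)].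

(* Generic form of (TC)/(TCG): pairs Dl A gives the set of pairs over which
   the sum in the bound ranges.  "RN derivative <= exp(C * S)" is written out
   as: kappa_eta(E) <= e^r kappa_eta'(E) for every F_Dl event E and every real
   r >= C * S (S may be +oo). *)
Definition TC_gen (d : nat) (R : realType) (dO : measure_display)
  (Om : measurableType dO) (P : probability Om R) (om : Om -> site d -> R)
  (pairs : set (site d) -> set (site d) -> set (site d * site d)) (C g : R) : Prop :=
  forall (V Dl : set (site d)), finite_set Dl -> Dl `<=` V ->
    (forall u v, Dl u -> ~ V v -> (1 < dist1 u v)%N) ->
    exists kappa, is_cond_law P om Dl V kappa /\
      forall A, A `<=` ~` V ->
      forall eta eta' : site d -> R, (forall v, 0 <= eta v) -> (forall v, 0 <= eta' v) ->
        (forall v, ~ V v -> ~ A v -> eta v = eta' v) ->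
        forall r : R,
          (C%:E * (\esum_(q in pairs Dl A) (expR (- g * (dist1 q.1 q.2)%:R))%:E)
             <= r%:E)%E ->
          forall E, cylsig Dl E -> kappa eta E <= expR r * kappa eta' E.

Definition TC (d : nat) (R : realType) (dO : measure_display)
  (Om : measurableType dO) (P : probability Om R) (om : Om -> site d -> R) (C g : R) :=
  TC_gen P om (fun Dl A => bdry Dl `*` bdry A) C g.

Definition TCG (d : nat) (R : realType) (dO : measure_display)
  (Om : measurableType dO) (P : probability Om R) (om : Om -> site d -> R) (C g : R) :=
  TC_gen P om (fun Dl A => Dl `*` A) C g.

(* Law of the increments: finitely supported (= bounded) probability on Z^d. *)
Definition step_law (d : nat) (R : realType) (supp : seq 'rV[int]_d)
  (p : 'rV[int]_d -> R) : Prop :=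
  [/\ uniq supp, (forall x, 0 <= p x), (forall x, x \notin supp -> p x = 0)
    & \sum_(x <- supp) p x = 1].

Fixpoint incr_seqs (T : Type) (s : seq T) (n : nat) : seq (seq T) :=
  match n with
  | 0 => [:: [::]]
  | n'.+1 => [seq x :: l | x <- s, l <- incr_seqs s n']
  end.

(* Z_N^{beta,eta} = E^S_0[exp(beta sum_{k=1}^N eta_{k,S_k})], S_k = X_1+...+X_k,
   the X_i i.i.d. with law p. *)
Definition partZ (d : nat) (R : realType) (supp : seq 'rV[int]_d)
  (p : 'rV[int]_d -> R) (eta : site d -> R) (beta : R) (N : nat) : R :=
  \sum_(l <- incr_seqs supp N)
    (\prod_(x <- l) p x) *
    expR (beta * \sum_(k < N) eta (k.+1, \sum_(i < k.+1) nth 0 l i)).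

Definition Wpart (d : nat) (R : realType) (dO : measure_display)
  (Om : measurableType dO) (P : probability Om R) (om : Om -> site d -> R)
  (supp : seq 'rV[int]_d) (p : 'rV[int]_d -> R) (N : nat) (beta : R) (x : Om) : R :=
  partZ supp p (om x) beta N / fine (\int[P]_y (partZ supp p (om y) beta N)%:E)%E.

Definition essnorm (R : realType) (T : R) (f : R -> R) : \bar R :=
  ess_sup (mrestr (@lebesgue_measure R) (measurable_itv `[0%R, T]))
          (fun b => (`|f b|)%:E).

From HB Require Import structures.
From mathcomp Require Import all_boot all_order all_algebra.
From mathcomp Require Import all_classical all_reals all_analysis ess_sup_inf.
From mathcomp Require Import measurable_realfun lra.
Import Order.TTheory GRing.Theory Num.Theory.
Import numFieldNormedType.Exports.
Local Open Scope classical_set_scope.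
Local Open Scope ring_scope.

(* Z_N(b) = sum_l w_l e^(b H_l) is a finite sum over
   the increment sequences l, H_l being the sum of omega along the path.  With
   Y := sum_l |H_l|, a path of weight w_0 > 0 gives Z_N(b) >= w_0 e^(-|b| Y), while
   |d/db Z_N| <= Y Z_N <= (sum_l w_l) e^((|b| + 1) Y).  Domination by e^((|b| + 2) Y)
   allows differentiation under E, so E Z_N is positive and C^1.  Hence on [0, T]
   1/W <= C e^(T Y) and |d/db log W| <= Y + C, both square integrable because Y has all
   exponential moments.  The essential suprema are measurable since, for functions
   continuous in b, they are suprema over the rational points of [0, T]. *)

Section real_facts.
Context {R : realType}.
Implicit Types u v : R.

Lemma le_expR u : u <= expR u.
Proof. by have := expR_ge1Dx u; lra. Qed.

Lemma sqr_le_expR u : u ^+ 2 <= expR (2 * `|u|).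
Proof.
rewrite -real_normK ?num_real // -[2]/(2%:R) expRM_natl.
by rewrite lerXn2r ?nnegrE ?expR_ge0 // le_expR.
Qed.

Lemma expRD_le u v : expR (u + v) <= expR (2 * u) + expR (2 * v).
Proof.
have := expR_ge0 (2 * u); have := expR_ge0 (2 * v).
case: (lerP u v) => uv.
  have : expR (u + v) <= expR (2 * v) by rewrite ler_expR; lra.
  lra.
have : expR (u + v) <= expR (2 * u) by rewrite ler_expR; lra.
lra.
Qed.

Lemma expR_normM_le c u : expR (c * `|u|) <= expR (c * u) + expR (- c * u).
Proof.
have := expR_ge0 (c * u); have := expR_ge0 (- c * u).
by case: (lerP 0 u) => [/ger0_norm|/ltr0_norm] ->; rewrite ?mulrN ?mulNr; lra.
Qed.

Lemma continuous_normr_gt_ball {f : R -> R} {b y : R} : {for b, continuous f} ->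
  y < `|f b| -> exists2 e, 0 < e & forall t, `|b - t| < e -> y < `|f t|.
Proof.
move=> cf yfb; have cnf : {for b, continuous (fun t => `|f t|)} by exact: cvg_norm.
have /(_ _) near_b := @cvgr_gt R _ _ _ _ _ cnf y yfb.
have [e /= e0 He] := (@nbhs_ballP R R^o b (fun t => y < `|f t|)).1 near_b.
by exists e.
Qed.

Lemma continuous_itv_bounded {f : R -> R} {a b : R} : a <= b -> continuous f ->
  exists M, forall t, a <= t <= b -> `|f t| <= M.
Proof.
move=> ab cf.
have cnf : continuous (fun t => `|f t|) by move=> t; apply: cvg_norm; exact: cf.
have [c _ hc] := EVT_max ab (continuous_subspaceT cnf).
by exists `|f c| => t tab; apply: hc; rewrite in_itv.
Qed.

Lemma derive1_ln_div (f g : R -> R) (b df dg : R) :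
  (forall t, 0 < f t) -> (forall t, 0 < g t) ->
  is_derive b 1 f df -> is_derive b 1 g dg ->
  derive1 (fun t => ln (f t / g t)) b = df / f b - dg / g b.
Proof.
move=> f0 g0 hf hg.
have -> : (fun t => ln (f t / g t)) = (@ln R \o f) - (@ln R \o g).
  apply/funext => t /=; rewrite lnM ?posrE ?invr_gt0 // lnV ?posrE //.
have dlnf : is_derive b 1 (@ln R \o f) ((f b)^-1 * df).
  exact: is_derive1_comp (is_derive1_ln (f0 b)) hf.
have dlng : is_derive b 1 (@ln R \o g) ((g b)^-1 * dg).
  exact: is_derive1_comp (is_derive1_ln (g0 b)) hg.
by rewrite derive1E derive_val ![_^-1 * _]mulrC.
Qed.

End real_facts.

Section exponential_moments.
Context {d : measure_display} {Om : measurableType d} {R : realType}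
  (P : probability Om R).

Definition has_exp_moments (f : Om -> R) :=
  measurable_fun setT f /\
  forall c : R, P.-integrable setT (fun x => (expR (c * f x))%:E).

Lemma measurable_expRM (f : Om -> R) (c : R) : measurable_fun setT f ->
  measurable_fun setT (fun x => expR (c * f x)).
Proof.
move=> mf; apply: measurableT_comp; first exact: measurable_expR.
by apply: measurable_funM => //; exact: measurable_cst.
Qed.

Lemma integrable_le_normr (f g : Om -> R) : measurable_fun setT f ->
  (forall x, `|f x| <= g x) -> P.-integrable setT (EFin \o g) ->
  P.-integrable setT (EFin \o f).
Proof.
move=> mf fg; apply: le_integrable => //; first exact/measurable_EFinP.
by move=> x _ /=; rewrite lee_fin (le_trans (fg x)) ?ler_norm.
Qed.

Lemma integrableD_EFin (f g : Om -> R) : P.-integrable setT (EFin \o f) ->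
  P.-integrable setT (EFin \o g) -> P.-integrable setT (EFin \o (f \+ g)).
Proof. by move=> intf intg; apply: eq_integrable (integrableD _ intf intg). Qed.

Lemma has_exp_moments_cst (k : R) : has_exp_moments (fun=> k).
Proof.
split=> [|c]; first exact: measurable_cst.
exact: finite_measure_integrable_cst.
Qed.

Lemma has_exp_momentsD (f g : Om -> R) : has_exp_moments f ->
  has_exp_moments g -> has_exp_moments (f \+ g).
Proof.
move=> [mf intf] [mg intg]; split=> [|c]; first exact: measurable_funD.
apply: (@integrable_le_normr _ (fun x => expR (2 * c * f x) + expR (2 * c * g x))).
- exact: measurable_expRM (measurable_funD mf mg).
- by move=> x; rewrite ger0_norm ?expR_ge0 // mulrDr -!mulrA expRD_le.
- exact: integrableD_EFin (intf _) (intg _).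
Qed.

Lemma has_exp_moments_sum (I : Type) (s : seq I) (F : I -> Om -> R) :
  (forall i, has_exp_moments (F i)) ->
  has_exp_moments (fun x => \sum_(i <- s) F i x).
Proof.
move=> hF; elim: s => [|i s ih].
  by under eq_fun do rewrite big_nil; exact: has_exp_moments_cst.
under eq_fun do rewrite big_cons; exact: has_exp_momentsD.
Qed.

Lemma has_exp_moments_norm (f : Om -> R) : has_exp_moments f ->
  has_exp_moments (fun x => `|f x|).
Proof.
move=> [mf intf]; split=> [|c]; first exact: measurableT_comp.
apply: (@integrable_le_normr _ (fun x => expR (c * f x) + expR (- c * f x))).
- by apply: measurable_expRM; exact: measurableT_comp.
- by move=> x; rewrite ger0_norm ?expR_ge0 // expR_normM_le.
- exact: integrableD_EFin (intf _) (intf _).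
Qed.

Lemma has_exp_moments_integrable_sqr (f : Om -> R) : has_exp_moments f ->
  P.-integrable setT (EFin \o (fun x => f x ^+ 2)).
Proof.
move=> hf; have [mf _] := hf; have [_ intnf] := has_exp_moments_norm _ hf.
apply: (@integrable_le_normr _ (fun x => expR (2 * `|f x|))) (intnf 2).
  exact: measurable_funX.
by move=> x; rewrite ger0_norm ?sqr_ge0 // sqr_le_expR.
Qed.

Lemma Rintegral_gt0 (f : Om -> R) : measurable_fun setT f ->
  P.-integrable setT (EFin \o f) -> (forall x, 0 < f x) -> 0 < \int[P]_x f x.
Proof.
move=> mf intf f_gt0.
rewrite lt_def Rintegral_ge0 ?andbT; last by move=> x _; exact: ltW.
apply/negP => /eqP Rint0; have := congr1 EFin Rint0.
rewrite fineK ?integrable_fin_num // => int0.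
have : ae_eq P setT (EFin \o f) (cst 0).
  apply/ae_eq_integral_abs => //; first exact/measurable_EFinP.
  apply: etrans int0; apply: eq_integral => x _.
  by rewrite gee0_abs // lee_fin ltW.
case=> N [mN PN0 sN]; have : (P setT <= P N)%E.
  apply: le_measure; rewrite ?inE //.
  by move=> x _; apply: sN => /(_ I) [] /eqP; rewrite gt_eqF.
by rewrite PN0 probability_setT lee_fin ler10.
Qed.

End exponential_moments.

Section essnorm_continuous.
Context {R : realType} {T : R}.
Hypothesis T_gt0 : 0 < T.

Let mu := mrestr (@lebesgue_measure R) (measurable_itv `[0%R, T]).

Lemma ae_itv0T (Q : R -> Prop) : (forall b, 0 <= b <= T -> Q b) ->
  \forall b \ae mu, Q b.
Proof.
move=> hQ; exists (~` `[0%R, T]%classic); split.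
- by apply: measurableC; exact: measurable_itv.
- by rewrite /mu /mrestr setICl measure0.
- by move=> b /= notQb b0T; apply/notQb/hQ; move: b0T; rewrite /= in_itv.
Qed.

Lemma itv0T_nbhs {b e : R} : 0 <= b <= T -> 0 < e ->
  Num.max 0 (b - e) < Num.min T (b + e) /\
  forall t, Num.max 0 (b - e) < t < Num.min T (b + e) ->
    0 <= t <= T /\ `|b - t| < e.
Proof.
move=> /andP[b0 bT] e0; have T0 := T_gt0; split.
  by rewrite lt_min !gt_max; apply/andP; split; apply/andP; split; lra.
move=> t; rewrite gt_max lt_min => /andP[/andP[? ?] /andP[? ?]].
by split; [apply/andP; split | rewrite ltr_norml; apply/andP; split]; lra.
Qed.

Lemma essnorm_gt (f : R -> R) (y b : R) : continuous f -> 0 <= b <= T ->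
  y < `|f b| -> (y%:E < essnorm T f)%E.
Proof.
move=> cf b0T yfb; rewrite ltNge; apply/negP => /ess_supP[A [mA muA0 sA]].
have [e e0 He] := continuous_normr_gt_ball (cf b) yfb.
have [lohi inI] := itv0T_nbhs b0T e0.
have sIA : `]Num.max 0 (b - e), Num.min T (b + e)[%classic `<=` A `&` `[0%R, T]%classic.
  move=> t; rewrite /= in_itv /= => /inI[t0T bt]; split=> //.
  by apply: sA => /=; rewrite lee_fin leNgt He.
have leIA := le_measure (@lebesgue_measure R) (mem_set (measurable_itv _))
  (mem_set (measurableI _ _ mA (measurable_itv `[0%R, T]))) sIA.
have : (@lebesgue_measure R `]Num.max 0%R (b - e)%R, Num.min T (b + e)%R[%classic
    <= 0)%E by rewrite -[leRHS]muA0.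
by rewrite lebesgue_measure_itv /= lte_fin lohi -EFinB lee_fin; lra.
Qed.

Lemma essnorm_le_rat (f : R -> R) (y : R) : continuous f ->
  (forall q : rat, 0 <= (ratr q : R) <= T -> `|f (ratr q)| <= y) ->
  (essnorm T f <= y%:E)%E.
Proof.
move=> cf fqy; apply/ess_supP/ae_itv0T => b b0T; rewrite lee_fin leNgt.
apply/negP => yfb.
have [e e0 He] := continuous_normr_gt_ball (cf b) yfb.
have [lohi inI] := itv0T_nbhs b0T e0.
have [q] := rat_in_itvoo lohi; rewrite in_itv /= => /inI[q0T bq].
by have := fqy q q0T; rewrite leNgt He.
Qed.

Lemma essnorm_gtP (f : R -> R) (y : R) : continuous f ->
  (y%:E < essnorm T f)%E <->
  exists q : rat, 0 <= (ratr q : R) <= T /\ y < `|f (ratr q)|.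
Proof.
move=> cf; split=> [|[q [q0T yfq]]]; last exact: essnorm_gt q0T yfq.
rewrite ltNge => /negP notle; apply: contrapT => noq.
apply/notle/essnorm_le_rat => // q q0T.
by rewrite leNgt; apply/negP => yfq; apply: noq; exists q.
Qed.

Let mu_setT_gt0 : (0 < mu setT)%E.
Proof.
rewrite /mu /mrestr setTI lebesgue_measure_itv /= lte_fin T_gt0 /=.
by rewrite sube0 lte_fin.
Qed.

Lemma essnorm_ge0 (f : R -> R) : (0 <= essnorm T f)%E.
Proof. by apply: ess_sup_ger mu_setT_gt0 _ => t; rewrite lee_fin. Qed.

Lemma essnorm_le (f : R -> R) (K : R) : (forall b, 0 <= b <= T -> `|f b| <= K) ->
  (essnorm T f <= K%:E)%E.
Proof. by move=> fK; apply/ess_supP/ae_itv0T => b /fK; rewrite lee_fin. Qed.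

Context {d : measure_display} {Om : measurableType d} (P : probability Om R).

Lemma measurable_essnorm (F : R -> Om -> R) :
  (forall b, measurable_fun setT (F b)) -> (forall x, continuous (F ^~ x)) ->
  measurable_fun setT (fun x => essnorm T (F ^~ x)).
Proof.
move=> mF cF _.
apply: (measurability _ (ErealGenOInfty.measurableE R)) => //.
move=> _ [_ [r ->] <-].
rewrite [X in measurable X](_ : _ = \bigcup_(q : rat)
    (if 0 <= (ratr q : R) <= T then [set x | r < `|F (ratr q) x|] else set0)).
  apply: bigcupT_measurable_rat => q; case: ifP => _ //.
  rewrite -[X in measurable X]setTI -preimage_itvoy.
  exact: (measurableT_comp _ (mF _)) measurableT _ (measurable_itv _).
rewrite predeqE => x; split.
- rewrite /= in_itv /= andbT => -[_ /(essnorm_gtP _ r (cF x)) [q [q0T rFq]]].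
  by exists q => //; rewrite q0T.
- move=> [q _]; case: ifP => q0T // rFq.
  rewrite /= in_itv /= andbT; split=> //.
  by apply/(essnorm_gtP _ r (cF x)); exists q.
Qed.

Lemma integrable_essnorm_sqr (F : R -> Om -> R) (K : Om -> R) :
  (forall b, measurable_fun setT (F b)) -> (forall x, continuous (F ^~ x)) ->
  (forall x b, 0 <= b <= T -> `|F b x| <= K x) ->
  P.-integrable setT (EFin \o (fun x => K x ^+ 2)) ->
  P.-integrable setT (fun x => let e := essnorm T (F ^~ x) in (e * e)%E).
Proof.
move=> mF cF FK intK2.
have me := measurable_essnorm _ mF cF.
apply: le_integrable intK2 => //; first exact: (emeasurable_funM me me).
move=> x _ /=; have e0 := essnorm_ge0 (F ^~ x).
have eK : (essnorm T (F ^~ x) <= (K x)%:E)%E by apply: essnorm_le => b /FK.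
have K0 : 0 <= K x by rewrite -lee_fin (le_trans e0).
rewrite gee0_abs ?mule_ge0 // ger0_norm ?exprn_ge0 // expr2 EFinM.
exact: lee_pmul.
Qed.

End essnorm_continuous.

Section exponential_sums.
Context {R : realType} {I : eqType}.
Implicit Types (s : seq I) (a h : I -> R).

Definition expsum s a h (b : R) := \sum_(i <- s) a i * expR (b * h i).

Lemma is_derive_expRM (k b : R) :
  is_derive b 1 (fun t => expR (t * k)) (k * expR (b * k)).
Proof.
have dlin : is_derive b 1 (fun t => t * k) k.
  have -> : (fun t => t * k) = k \*: id by apply/funext => t; rewrite /= mulrC.
  by apply: is_derive_eq; exact: mulr1.
by rewrite mulrC; exact: is_derive1_comp.
Qed.

Lemma is_derive_expsum s a h (b : R) :
  is_derive b 1 (expsum s a h) (expsum s (a \* h) h b).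
Proof.
rewrite /expsum; elim: s => [|i s ih].
  under [X in is_derive _ _ X]eq_fun do rewrite big_nil.
  by rewrite big_nil; exact: is_derive_cst.
under [X in is_derive _ _ X]eq_fun do rewrite big_cons.
rewrite big_cons; apply: is_deriveD => //.
by rewrite /= -mulrA; exact: is_deriveZ (is_derive_expRM (h i) b).
Qed.

Lemma continuous_expsum s a h : continuous (expsum s a h).
Proof.
move=> b; have [+ _] := is_derive_expsum s a h b.
by move=> /derivable1_diffP/differentiable_continuous.
Qed.

Section bounds.
Variables (s : seq I) (a h : I -> R) (Y : R).
Hypothesis a_ge0 : forall i, 0 <= a i.
Hypothesis h_le : forall i, i \in s -> `|h i| <= Y.

Let h_le_normM (b : R) {i} : i \in s -> `|b * h i| <= `|b| * Y.
Proof. by move=> si; rewrite normrM ler_wpM2l ?h_le. Qed.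

Lemma expsum_ge_term i (b : R) : i \in s ->
  a i * expR (- (`|b| * Y)) <= expsum s a h b.
Proof.
move=> si; rewrite /expsum (big_rem i) //= -[leLHS]addr0.
apply: lerD; last by apply: sumr_ge0 => j _; rewrite mulr_ge0 ?expR_ge0.
apply: ler_wpM2l => //; rewrite ler_expR.
exact: lerNnormlW (h_le_normM b si).
Qed.

Lemma expsum_le (b : R) :
  expsum s a h b <= (\sum_(i <- s) a i) * expR (`|b| * Y).
Proof.
rewrite /expsum mulr_suml big_seq [leRHS]big_seq; apply: ler_sum => i si.
apply: ler_wpM2l => //; rewrite ler_expR.
exact: le_trans (ler_norm _) (h_le_normM b si).
Qed.

Lemma norm_expsum_deriv_le (b : R) :
  `|expsum s (a \* h) h b| <= Y * expsum s a h b.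
Proof.
rewrite /expsum mulr_sumr (le_trans (ler_norm_sum _ _ _)) //.
rewrite big_seq [leRHS]big_seq; apply: ler_sum => i si.
rewrite /= !normrM (ger0_norm (expR_ge0 _)) (ger0_norm (a_ge0 i)).
rewrite mulrA [Y * _]mulrC; apply: ler_wpM2r; first exact: expR_ge0.
by apply: ler_wpM2l => //; exact: h_le.
Qed.

End bounds.
End exponential_sums.

Lemma measurable_fun_inv_pos {d : measure_display} {T : measurableType d}
    {R : realType} (f : T -> R) :
  (forall x, 0 < f x) -> measurable_fun setT f ->
  measurable_fun setT (fun x => (f x)^-1).
Proof.
move=> f_gt0 mf.
have -> : (fun x => (f x)^-1) = (fun x => expR (- ln (f x))).
  by apply/funext => x; rewrite expRN lnK // posrE.
apply: measurableT_comp => //; apply: (measurable_funN (f := fun x => ln (f x))).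
exact: measurableT_comp (@measurable_ln R) mf.
Qed.

Lemma nseq_in_incr_seqs {T : eqType} (s : seq T) z n : z \in s ->
  nseq n z \in incr_seqs s n.
Proof.
move=> zs; elim: n => [|n ih] /=; first by rewrite inE.
exact: (allpairs_f (fun z l => z :: l) zs ih).
Qed.

Section directed_polymer.
Context {d : nat} {R : realType} {dO : measure_display} {Om : measurableType dO}
  (P : probability Om R) (supp : seq 'rV[int]_d) (p : 'rV[int]_d -> R)
  (om : Om -> site d -> R) (N : nat).
Hypothesis p_law : step_law supp p.
Hypothesis measurable_om : forall v, measurable_fun setT (fun x => om x v).
Hypothesis integrable_expR_om : forall (beta : R) v,
  P.-integrable setT (fun x => (expR (beta * om x v))%:E).

Let paths := incr_seqs supp N.
Let weight (l : seq 'rV[int]_d) : R := \prod_(z <- l) p z.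
Let energy (x : Om) (l : seq 'rV[int]_d) : R :=
  \sum_(k < N) om x (k.+1, \sum_(i < k.+1) nth 0 l i).
Let Y (x : Om) : R := \sum_(l <- paths) `|energy x l|.
Let mass : R := \sum_(l <- paths) weight l.

(* [Z b x] is [partZ supp p (om x) b N] and [Z' b x] its derivative in [b]. *)
Let Z (b : R) (x : Om) : R := expsum paths weight (energy x) b.
Let Z' (b : R) (x : Om) : R := expsum paths (weight \* energy x) (energy x) b.
Let EZ (b : R) : R := \int[P]_x Z b x.
Let EZ' (b : R) : R := \int[P]_x Z' b x.

Let weight_ge0 l : 0 <= weight l.
Proof. by apply: prodr_ge0 => z _; case: p_law. Qed.

Let positive_path : exists2 l, l \in paths & 0 < weight l.
Proof.
case: p_law => _ p_ge0 _ p_sum1.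
have [z zs pz] : exists2 z, z \in supp & 0 < p z.
  apply: contrapT => nopos; have : \sum_(z <- supp) p z <= 0.
    rewrite big_seq; apply: sumr_le0 => z zs; rewrite leNgt; apply/negP => pz.
    by apply: nopos; exists z.
  by rewrite p_sum1 ler10.
exists (nseq N z); first exact: nseq_in_incr_seqs.
by rewrite /weight big_seq prodr_gt0 // => i /[!mem_nseq] /andP[_ /eqP ->].
Qed.

Let energy_le_Y x l : l \in paths -> `|energy x l| <= Y x.
Proof. by move=> pl; rewrite /Y (big_rem l) //= lerDl sumr_ge0. Qed.

Let Y_ge0 x : 0 <= Y x.
Proof. exact: sumr_ge0. Qed.

Let has_exp_moments_energy l : has_exp_moments P (energy ^~ l).
Proof.
apply: has_exp_moments_sum => k.
by split=> [|c]; [exact: measurable_om | exact: integrable_expR_om].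
Qed.

Let has_exp_moments_Y : has_exp_moments P Y.
Proof.
by apply: has_exp_moments_sum => l; exact: has_exp_moments_norm.
Qed.

Let integrable_expR_Y (K c : R) :
  P.-integrable setT (EFin \o (fun x => K * expR (c * Y x))).
Proof. exact: integrableZl (has_exp_moments_Y.2 c). Qed.

Let Z_lower_bound : exists2 w0, 0 < w0 &
  forall b x, w0 * expR (- (`|b| * Y x)) <= Z b x.
Proof.
have [l pl wl] := positive_path; exists (weight l) => // b x.
exact: expsum_ge_term weight_ge0 (energy_le_Y x) _ _ pl.
Qed.

Let Z_gt0 b x : 0 < Z b x.
Proof.
have [w0 w0_gt0 Zge] := Z_lower_bound.
by apply: lt_le_trans (Zge b x); rewrite mulr_gt0 ?expR_gt0.
Qed.

Let invZ_le : exists2 k, 0 < k &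
  forall T b x, `|b| <= T -> (Z b x)^-1 <= k * expR (T * Y x).
Proof.
have [w0 w0_gt0 Zge] := Z_lower_bound; exists w0^-1; rewrite ?invr_gt0 // => T b x bT.
have lbT : 0 < w0 * expR (- (T * Y x)) by rewrite mulr_gt0 ?expR_gt0.
rewrite -[expR _]invrK -invfM -expRN lef_pV2 ?posrE ?Z_gt0 //.
apply: le_trans (Zge b x); rewrite ler_pM2l // ler_expR lerN2.
exact: ler_wpM2r (Y_ge0 x) _ _ bT.
Qed.

Let Z_le b x : Z b x <= mass * expR (`|b| * Y x).
Proof. exact: expsum_le weight_ge0 (energy_le_Y x) b. Qed.

Let Z'_le_Y b x : `|Z' b x| <= Y x * Z b x.
Proof. exact: norm_expsum_deriv_le weight_ge0 (energy_le_Y x) b. Qed.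

Let Z'_le b x : `|Z' b x| <= mass * expR ((`|b| + 1) * Y x).
Proof.
apply: le_trans (Z'_le_Y b x) _.
rewrite mulrDl mul1r expRD mulrA [leRHS]mulrC.
by apply: ler_pM => //; [exact: ltW | exact: le_expR].
Qed.

Let measurable_Z b : measurable_fun setT (Z b).
Proof.
apply: measurable_sum => l; apply: measurable_funM => //.
exact: measurable_expRM (has_exp_moments_energy l).1.
Qed.

Let measurable_Z' b : measurable_fun setT (Z' b).
Proof.
have menergy l := (has_exp_moments_energy l).1.
apply: measurable_sum => l; apply: measurable_funM.
  exact: measurable_funM.
exact: measurable_expRM.
Qed.

Let integrable_Z b : P.-integrable setT (EFin \o Z b).
Proof.
apply: integrable_le_normr (measurable_Z b) _ (integrable_expR_Y mass `|b|) => x.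
by rewrite ger0_norm ?Z_le // ltW.
Qed.

Let integrable_Z' b : P.-integrable setT (EFin \o Z' b).
Proof.
exact: integrable_le_normr (measurable_Z' b) (Z'_le b) (integrable_expR_Y _ _).
Qed.

Let Z'_dominated b t x : `]b - 1, b + 1[%classic t ->
  `|Z' t x| <= mass * expR ((`|b| + 2) * Y x).
Proof.
rewrite /= in_itv /= => /andP[lt_t tl]; apply: le_trans (Z'_le t x) _.
have mass_ge0 : 0 <= mass by exact: sumr_ge0.
rewrite ler_wpM2l // ler_expR ler_wpM2r //.
have := ler_normD (t - b) b; rewrite subrK.
have : `|t - b| <= 1 by rewrite ler_norml; apply/andP; split; lra.
lra.
Qed.

Let is_derive_EZ (b : R) : is_derive b 1 EZ (EZ' b).
Proof.
have b_in : `]b - 1, b + 1[%classic b by rewrite /= in_itv /=; apply/andP; split; lra.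
have intZ t (_ : `]b - 1, b + 1[%classic t) := integrable_Z t.
have dZ t x (_ : `]b - 1, b + 1[%classic t) (_ : setT x) : derivable (Z ^~ x) t 1.
  by case: (is_derive_expsum paths weight (energy x) t).
have G_ge0 x : 0 <= mass * expR ((`|b| + 2) * Y x).
  by rewrite mulr_ge0 ?expR_ge0 ?sumr_ge0.
have dZ_le t x (bt : `]b - 1, b + 1[%classic t) (_ : setT x) :
    `|partial1of2 Z t x| <= mass * expR ((`|b| + 2) * Y x).
  rewrite partial1of2E; have [_ ->] := is_derive_expsum paths weight (energy x) t.
  exact: Z'_dominated.
have intG := integrable_expR_Y mass (`|b| + 2).
have := differentiation_under_integral (mu := P) measurableT b_in intZ dZ G_ge0 intG dZ_le.
have := derivable_under_integral (mu := P) measurableT b_in intZ dZ G_ge0 intG dZ_le.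
move=> dEZ EZ'E; apply: DeriveDef => //; rewrite -derive1E EZ'E.
apply: eq_Rintegral => x _; rewrite partial1of2E.
by have [_ ->] := is_derive_expsum paths weight (energy x) b.
Qed.

Let continuous_EZ : continuous EZ.
Proof.
by move=> b; have [/derivable1_diffP/differentiable_continuous] := is_derive_EZ b.
Qed.

Let continuous_EZ' : continuous EZ'.
Proof.
move=> b; have b_in : `]b - 1, b + 1[%classic b.
  by rewrite /= in_itv /=; apply/andP; split; lra.
have intZ' t (_ : `]b - 1, b + 1[%classic t) := integrable_Z' t.
have cZ' : \forall x \ae P, setT x ->
    {in `]b - 1, b + 1[%classic, continuous (Z' ^~ x)}.
  by apply: aeW => x _ t _; exact: continuous_expsum.
have Z'_le_G t (bt : `]b - 1, b + 1[%classic t) :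
    \forall x \ae P, setT x -> `|Z' t x| <= mass * expR ((`|b| + 2) * Y x).
  by apply: aeW => x _; exact: Z'_dominated.
exact: (continuity_under_integral (mu := P) measurableT intZ' cZ'
  (integrable_expR_Y _ _) Z'_le_G) (mem_set b_in).
Qed.

Let EZ_gt0 b : 0 < EZ b.
Proof. exact: Rintegral_gt0. Qed.

Let derive_lnW x b :
  derive1 (fun b' => ln (Wpart P om supp p N b' x)) b = Z' b x / Z b x - EZ' b / EZ b.
Proof.
exact: derive1_ln_div (Z_gt0 ^~ x) EZ_gt0 (is_derive_expsum _ _ _ b) (is_derive_EZ b).
Qed.

Lemma integrable_essnorm_sqr_invW (T : R) : 0 < T -> P.-integrable setT
  (fun x => let e := essnorm T (fun b => (Wpart P om supp p N b x)^-1) in (e * e)%E).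
Proof.
move=> T_gt0; have [k k_gt0 invZ_leT] := invZ_le.
have [M EZ_le] := continuous_itv_bounded (ltW T_gt0) continuous_EZ.
have invW x : (fun b => (Wpart P om supp p N b x)^-1) = fun b => EZ b / Z b x.
  by apply/funext => b; rewrite invf_div.
under eq_fun do rewrite invW.
apply: (integrable_essnorm_sqr T_gt0 P _ (fun x => M * (k * expR (T * Y x)))).
- move=> b; apply: measurable_funM => //.
  exact: measurable_fun_inv_pos (Z_gt0 b) (measurable_Z b).
- move=> x b; apply: continuousM; first exact: continuous_EZ.
  by apply: continuousV; [rewrite gt_eqF | exact: continuous_expsum].
- move=> x b /andP[b0 bT]; rewrite normrM normfV (gtr0_norm (Z_gt0 b x)).
  apply: ler_pM; [exact: normr_ge0 | by rewrite invr_ge0 ltW ?Z_gt0 | |].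
    by apply: EZ_le; rewrite b0.
  by apply: invZ_leT; rewrite ger0_norm.
- apply: eq_integrable (integrable_expR_Y ((M * k) ^+ 2) (2 * T)) => // x _.
  by rewrite /= !exprMn -expRM_natl !mulrA.
Qed.

Lemma integrable_essnorm_sqr_derive_lnW (T : R) : 0 < T -> P.-integrable setT
  (fun x => let e := essnorm T
     (fun b => derive1 (fun b' => ln (Wpart P om supp p N b' x)) b) in (e * e)%E).
Proof.
move=> T_gt0; under eq_fun do rewrite (funext (derive_lnW _)).
have cEZ'_EZ : continuous (fun b => EZ' b / EZ b).
  move=> b; apply: continuousM; first exact: continuous_EZ'.
  by apply: continuousV; [rewrite gt_eqF | exact: continuous_EZ].
have [M EZ'_EZ_le] := continuous_itv_bounded (ltW T_gt0) cEZ'_EZ.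
apply: (integrable_essnorm_sqr T_gt0 P _ (Y \+ fun=> M)).
- move=> b; apply: measurable_funB => //.
  apply: measurable_funM (measurable_Z' b) _.
  exact: measurable_fun_inv_pos (Z_gt0 b) (measurable_Z b).
- move=> x; have -> : (fun b => Z' b x / Z b x - EZ' b / EZ b) =
    (fun b => Z' b x / Z b x) - (fun b => EZ' b / EZ b) by [].
  move=> b; apply: continuousB (cEZ'_EZ b); apply: continuousM.
    exact: continuous_expsum.
  by apply: continuousV; [rewrite gt_eqF | exact: continuous_expsum].
- move=> x b b0T; apply: le_trans (ler_normB _ _) _; apply: lerD; last exact: EZ'_EZ_le.
  by rewrite normrM normfV (gtr0_norm (Z_gt0 b x)) ler_pdivrMr.
- exact/has_exp_moments_integrable_sqr/has_exp_momentsD/has_exp_moments_cst.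
Qed.

End directed_polymer.

Theorem lemmaB2 (d : nat) (R : realType) (dO : measure_display)
  (Om : measurableType dO) (P : probability Om R)
  (supp : seq 'rV[int]_d) (p : 'rV[int]_d -> R) (om : Om -> site d -> R) (C g : R) :
  (3 <= d)%N ->
  step_law supp p ->
  (forall v, measurable_fun setT (fun x => om x v)) ->
  (forall (beta : R) v, P.-integrable setT (fun x => (expR (beta * om x v))%:E)) ->
  markov_field P om ->
  (TC P om C g \/ TCG P om C g) ->
  forall (N : nat) (T : R), 0 < T ->
    P.-integrable setT
      (fun x => let e := essnorm T (fun b => (Wpart P om supp p N b x)^-1) in (e * e)%E) /\
    P.-integrable setT
      (fun x => let e := essnorm T
                   (fun b => derive1 (fun b' => ln (Wpart P om supp p N b' x)) b) in (e * e)%E).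
Proof.
move=> _ p_law measurable_om integrable_expR_om _ _ N T T_gt0; split.
- exact: integrable_essnorm_sqr_invW.
- exact: integrable_essnorm_sqr_derive_lnW.
Qed.
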